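(* Let $M=\begin{pmatrix}g_{11}&g_{12}\\-\det(M)(1+t^{-1}+t)\overline{g_{12}}&\det(M)\overline{g_{11}}\end{pmatrix}\in\mathrm{GL}(2,\mathbb{Z}[t,t^{-1}])$ satisfy $\det(M)=(-t)^k$ for some integer $k$. Then $M\in\phi(\mathcal{B})$ if and only if $g_{11}|_{t=\zeta_3}=1$, where $\zeta_3$ is a complex number with $\zeta_3^2+\zeta_3+1=0$.
   Context: For a Laurent polynomial (or matrix) in $t$, the bar denotes substitution $t\mapsto t^{-1}$. Let $J_3=\begin{pmatrix}1&-t^{-1}&-t^{-1}\\-t&1&-t^{-1}\\-t&-t&1\end{pmatrix}$, $v=(t,t^2,t^3)$ (a row vector) and $\vec{1}=(1,1,1)^T$. The formal Burau group is $\mathcal{B}=\{A\in\mathrm{GL}(3,\mathbb{Z}[t,t^{-1}]) : vA=v,\ A\vec 1=\vec 1,\ \overline{A}J_3A^T=J_3\}$. For $A=(A_{ij})\in\mathcal{B}$ put, for $k=1,2$, $f_{k1}=A_{k1}(1+t+t^2)-1$, $f_{k2}=A_{k1}+A_{k2}(1+t)-1$, and $g_{kl}=f_{kl}/(t(1+t))$ (here $g_{kl}$ refers to these quantities computed from $A$). Define $\phi(A)=\begin{pmatrix}g_{11}&g_{12}\\ t^{-1}g_{11}+(1+t)g_{21}& t^{-1}g_{12}+(1+t)g_{22}\end{pmatrix}$. *)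

(* Z[t,t^-1] is realised inside the fraction field
   F = Frac(Z[t]) of the integer polynomial ring; t = 'X. *)
From HB Require Import structures.
From mathcomp Require Import all_boot all_order all_algebra all_field.
Set Implicit Arguments. Unset Strict Implicit. Unset Printing Implicit Defensive.
Import Order.TTheory GRing.Theory Num.Theory.
Local Open Scope ring_scope.

Notation F := {fraction {poly int}}.
Notation "x %:F" := (@FracField.tofrac _ x) : ring_scope.

Definition tt : F := ('X : {poly int})%:F.

Definition laurent (x : F) : Prop :=
  exists (n : nat) (p : {poly int}), x = p%:F / tt ^+ n.

Definition subst_inv (q : {poly int}) : F :=
  (map_poly (fun c : int => (c%:P : {poly int})%:F) q).[tt^-1].

(* bar : t |-> t^-1, on the whole fraction field:
   bar (a/b) = a(t^-1)/b(t^-1), computed on the canonical representative *)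
Definition bar (x : F) : F :=
  let r := repr x in subst_inv \n_r / subst_inv \d_r.

Definition barmx (m n : nat) (A : 'M[F]_(m, n)) : 'M[F]_(m, n) := map_mx bar A.

Definition inGL (n : nat) (A : 'M[F]_n) : Prop :=
  (forall i j, laurent (A i j)) /\
  exists B : 'M[F]_n, (forall i j, laurent (B i j)) /\
    A *m B = 1%:M /\ B *m A = 1%:M.

Definition J3 : 'M[F]_3 :=
  \matrix_(i < 3, j < 3)
    (if (val i == val j) then 1 else if (val i < val j)%N then - tt^-1 else - tt).

Definition vrow : 'rV[F]_3 := \row_(j < 3) tt ^+ (val j).+1.

Definition ones : 'cV[F]_3 := const_mx 1.

Definition burau (A : 'M[F]_3) : Prop :=
  inGL A /\ vrow *m A = vrow /\ A *m ones = ones /\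
  barmx A *m J3 *m A^T = J3.

Definition i0 : 'I_3 := @Ordinal 3 0 isT.
Definition i1 : 'I_3 := @Ordinal 3 1 isT.

Definition mx2 (a b c d : F) : 'M[F]_2 :=
  \matrix_(i < 2, j < 2)
    (if val i == 0%N then (if val j == 0%N then a else b)
     else (if val j == 0%N then c else d)).

Definition fkl (A : 'M[F]_3) (k : 'I_3) (l : nat) : F :=
  if l == 1%N then A k i0 * (1 + tt + tt ^+ 2) - 1
  else A k i0 + A k i1 * (1 + tt) - 1.

Definition gkl (A : 'M[F]_3) (k : 'I_3) (l : nat) : F :=
  fkl A k l / (tt * (1 + tt)).

Definition phi (A : 'M[F]_3) : 'M[F]_2 :=
  mx2 (gkl A i0 1) (gkl A i0 2)
      (tt^-1 * gkl A i0 1 + (1 + tt) * gkl A i1 1)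
      (tt^-1 * gkl A i0 2 + (1 + tt) * gkl A i1 2).

Definition in_phiB (M : 'M[F]_2) : Prop := exists A, burau A /\ phi A = M.

Definition laurent_eval (zeta : algC) (x : F) (z : algC) : Prop :=
  exists (n : nat) (p : {poly int}),
    x = p%:F / tt ^+ n /\
    (map_poly (fun c : int => c%:~R : algC) p).[zeta] / zeta ^+ n = z.

(* the matrix M of the statement, with det(M) replaced by (-t)^k *)
Definition Mform (g11 g12 : F) (k : int) : 'M[F]_2 :=
  mx2 g11 g12 (- ((- tt) ^ k) * (1 + tt^-1 + tt) * bar g12)
      ((- tt) ^ k * bar g11).

From HB Require Import structures.
From mathcomp Require Import all_boot all_order all_algebra all_field.
From mathcomp Require Import zify ring.
Set Implicit Arguments. Unset Strict Implicit. Unset Printing Implicit Defensive.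
Import Order.TTheory GRing.Theory Num.Theory.
Local Open Scope ring_scope.

(* Given a 2x2 matrix M, the conditions vrow *m A = vrow, A *m ones = ones and
   phi A = M determine A.  When M has the shape of the statement,
   det M = (-t)^k amounts to the unitarity relation
   g11 * bar g11 + (1 + t^-1 + t) * g12 * bar g12 = 1, and this relation makes A
   preserve the form J3.  So M lies in phi(B) iff the entries of A are Laurent
   polynomials.  The (1,1) entry is (t (1 + t) g11 + 1) / (1 + t + t^2); since
   t (1 + t) = -1 at zeta, it is Laurent iff g11 - 1 is divisible by 1 + t + t^2,
   i.e. iff g11(zeta) = 1.  The remaining entries then only involve quotients by
   1 + t of x - bar x and of 1 - (-t)^k, which are Laurent because both
   numerators vanish at t = -1. *)

(** * The explicit preimage under phi *)

Section BurauLift.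
Variables (K : fieldType) (t : K).

Definition lift11 (a : K) := (t * (1 + t) * a + 1) / (1 + t + t ^+ 2).
Definition lift12 (a b : K) := (t * (1 + t) * b + 1 - lift11 a) / (1 + t).
Definition lift21 (a c : K) := (t * c - a + 1) / (1 + t + t ^+ 2).
Definition lift22 (a b c d : K) := (t * d - b + 1 - lift21 a c) / (1 + t).

(* The first two rows are forced by phi A = mx2 a b c d and A *m ones = ones,
   the last one by vrow *m A = vrow. *)
Definition burau_lift (a b c d : K) : 'M[K]_3 :=
  \matrix_(i < 3, j < 3)
    let x1 := [:: lift11 a; lift12 a b; 1 - lift11 a - lift12 a b]`_j in
    let x2 := [:: lift21 a c; lift22 a b c d; 1 - lift21 a c - lift22 a b c d]`_j in
    [:: x1; x2; (t ^+ j.+1 - t * x1 - t ^+ 2 * x2) / t ^+ 3]`_i.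

(* For the matrix M of the statement: u = det M, ab = bar a and bb = bar b. *)
Definition unitary_lift (u a b ab bb : K) : 'M[K]_3 :=
  burau_lift a b (- u * (1 + t^-1 + t) * bb) (u * ab).

Definition burau_form : 'M[K]_3 :=
  \matrix_(i < 3, j < 3)
    (if val i == val j then 1 else if (val i < val j)%N then - t^-1 else - t).

Definition phi_g1 (x : K) := (x * (1 + t + t ^+ 2) - 1) / (t * (1 + t)).
Definition phi_g2 (x y : K) := (x + y * (1 + t) - 1) / (t * (1 + t)).

Hypotheses (t_neq0 : t != 0) (t1_neq0 : 1 + t != 0) (Phi_neq0 : 1 + t + t ^+ 2 != 0).

Lemma det_burau_lift a b c d : \det (burau_lift a b c d) = a * d - b * c.
Proof.
rewrite (expand_det_row _ ord0) !big_ord_recr big_ord0 /= /cofactor.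
rewrite !(expand_det_row _ ord0) !big_ord_recr !big_ord0 /= /cofactor !det_mx11.
rewrite !mxE /= /bump /= /lift22 /lift12 /lift21 /lift11.
by field; rewrite t_neq0 t1_neq0 Phi_neq0.
Qed.

Lemma powers_mul_burau_lift a b c d :
  (\row_(j < 3) t ^+ j.+1) *m burau_lift a b c d = \row_(j < 3) t ^+ j.+1.
Proof.
apply/rowP => j; rewrite !(mxE, big_ord_recr, big_ord0) /=.
by case: j => [[|[|[|?]]] ?] //=; field; rewrite ?t_neq0.
Qed.

Lemma burau_lift_mul_ones a b c d :
  burau_lift a b c d *m (const_mx 1 : 'cV_3) = const_mx 1.
Proof.
apply/colP => i; rewrite !(mxE, big_ord_recr, big_ord0) /=.
by case: i => [[|[|[|?]]] ?] //=; field; rewrite ?t_neq0.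
Qed.

Lemma phi_g1_lift11 a : phi_g1 (lift11 a) = a.
Proof. by rewrite /phi_g1 /lift11; field; rewrite t_neq0 t1_neq0 Phi_neq0. Qed.

Lemma phi_g2_lift12 a b : phi_g2 (lift11 a) (lift12 a b) = b.
Proof. by rewrite /phi_g2 /lift12 /lift11; field; rewrite t_neq0 t1_neq0 Phi_neq0. Qed.

Lemma phi_g1_lift21 a c : t^-1 * a + (1 + t) * phi_g1 (lift21 a c) = c.
Proof. by rewrite /phi_g1 /lift21; field; rewrite t_neq0 t1_neq0 Phi_neq0. Qed.

Lemma phi_g2_lift22 a b c d :
  t^-1 * b + (1 + t) * phi_g2 (lift21 a c) (lift22 a b c d) = d.
Proof. by rewrite /phi_g2 /lift22 /lift21; field; rewrite t_neq0 t1_neq0 Phi_neq0. Qed.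

Lemma lift11_Phi h : lift11 (1 + (1 + t + t ^+ 2) * h) = 1 + t * (1 + t) * h.
Proof. by rewrite /lift11; field; rewrite Phi_neq0. Qed.

Lemma lift12_Phi h b : lift12 (1 + (1 + t + t ^+ 2) * h) b = t * b - t * h.
Proof. by rewrite /lift12 /lift11; field; rewrite t1_neq0 Phi_neq0. Qed.

Lemma lift21_Phi u h bb :
  lift21 (1 + (1 + t + t ^+ 2) * h) (- u * (1 + t^-1 + t) * bb) = - (u * bb) - h.
Proof. by rewrite /lift21; field; rewrite t_neq0 Phi_neq0. Qed.

Lemma lift22_Phi u h hb b bb :
  lift22 (1 + (1 + t + t ^+ 2) * h) b (- u * (1 + t^-1 + t) * bb)
         (u * (1 + (1 + t^-1 + t^-1 ^+ 2) * hb)) =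
  (1 - u) / (1 + t) * (1 - bb + hb) + u - (b - bb) / (1 + t) + (h - hb) / (1 + t)
  + u * t^-1 * (1 + t) * hb.
Proof. by rewrite /lift22 /lift21; field; rewrite t_neq0 t1_neq0 Phi_neq0. Qed.

Lemma sub_inv_div1t : (t - t^-1) / (1 + t) = 1 - t^-1.
Proof. by field; rewrite t_neq0 t1_neq0. Qed.

End BurauLift.

Lemma map_burau_lift (K K' : fieldType) (f : {rmorphism K -> K'}) t a b c d :
  map_mx f (burau_lift t a b c d) = burau_lift (f t) (f a) (f b) (f c) (f d).
Proof.
apply/matrixP => i j; rewrite !mxE /lift22 /lift12 /lift21 /lift11.
by case: i => [[|[|[|?]]] ?] //=; case: j => [[|[|[|?]]] ?] //=;
  rewrite ?(rmorphB, rmorphD, rmorphN, rmorphM, fmorphV, rmorphXn, rmorph1).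
Qed.

Lemma map_unitary_lift (K K' : fieldType) (f : {rmorphism K -> K'}) t u a b ab bb :
  map_mx f (unitary_lift t u a b ab bb) =
  unitary_lift (f t) (f u) (f a) (f b) (f ab) (f bb).
Proof.
by rewrite map_burau_lift !(rmorphM, rmorphN, rmorphD, fmorphV, rmorph1).
Qed.

Lemma unimodular_cases (K : fieldType) (k a b ab bb : K) : k != 0 ->
  a * ab + k * b * bb = 1 ->
  (a != 0 /\ ab = (1 - k * b * bb) / a) \/ (a = 0 /\ b != 0 /\ bb = (k * b)^-1).
Proof.
move=> k0 D; have [a0|a0] := eqVneq a 0; [right|left].
  have b0 : b != 0.
    by apply: contra_eq_neq D => b0; rewrite a0 b0 !(mul0r, mulr0) addr0 eq_sym oner_neq0.
  split=> //; split=> //; apply: (mulfI (mulf_neq0 k0 b0)).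
  by rewrite mulfV ?mulf_neq0 // -D a0; ring.
by split=> //; rewrite -D; field.
Qed.

Lemma unitary_lift_form (K : fieldType) (t u a b ab bb : K) :
  t != 0 -> u != 0 -> 1 + t != 0 -> 1 + t + t ^+ 2 != 0 ->
  a * ab + (1 + t^-1 + t) * b * bb = 1 ->
  unitary_lift t^-1 u^-1 ab bb a b *m burau_form t *m (unitary_lift t u a b ab bb)^T
  = burau_form t.
Proof.
move=> t0 u0 s0 P0 D.
have k0 : 1 + t^-1 + t != 0.
  have -> : 1 + t^-1 + t = (1 + t + t ^+ 2) / t by field.
  by rewrite mulf_neq0 // invr_neq0.
apply/matrixP => i j; rewrite !(mxE, big_ord_recr, big_ord0) /=.
rewrite /lift22 /lift12 /lift21 /lift11.
have [[a0 ->]|[-> [b0 ->]]] := unimodular_cases k0 D;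
  case: i => [[|[|[|?]]] ?] //=; case: j => [[|[|[|?]]] ?] //=;
  field; by rewrite ?t0 ?s0 ?P0 ?a0 ?b0 ?u0 ?oner_neq0.
Qed.

(** * The involution bar *)

Lemma tt_neq0 : tt != 0.
Proof. by rewrite tofrac_eq0 polyX_eq0. Qed.

Lemma tt1_neq0 : 1 + tt != 0.
Proof. by rewrite -tofrac1 -rmorphD tofrac_eq0 -size_poly_eq0 addrC size_XaddC. Qed.

Lemma ntz_neq0 (k : int) : (- tt) ^ k != 0.
Proof. by apply: expfz_neq0; rewrite oppr_eq0; exact: tt_neq0. Qed.

Lemma tofrac_int (c : int) : (c%:P)%:F = c%:~R :> F.
Proof. by rewrite -[c in c%:P]intz !rmorph_int. Qed.

Lemma intrF_inj : injective (intr : int -> F).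
Proof.
by move=> a b; rewrite -!tofrac_int => /eqP; rewrite tofrac_eq => /eqP /polyC_inj.
Qed.

Lemma frac_numden (x : F) : x = (\n_(repr x))%:F / (\d_(repr x))%:F.
Proof.
set r := repr x; have d_neq0 : (\d_r)%:F != 0 by rewrite tofrac_eq0; exact: denom_ratioP.
apply: (mulIf d_neq0); rewrite mulfVK //.
have -> : x = (\pi_F r)%qT by rewrite reprK.
unlock FracField.tofrac => /=; rewrite -[_ * _]/(FracField.mul _ _) -FracField.pi_mul.
apply/eqmodP; rewrite /= FracField.equivfE /FracField.mulf.
by rewrite !numden_Ratio ?mulf_neq0 ?oner_neq0 ?denom_ratioP //; apply/eqP; ring.
Qed.

Lemma subst_invE q : subst_inv q = (map_poly intr q).[tt^-1].
Proof. by congr horner; apply: eq_map_poly => c; rewrite tofrac_int. Qed.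

Lemma subst_inv_is_zmod_morphism : zmod_morphism subst_inv.
Proof. by move=> p q; rewrite !subst_invE rmorphB hornerD hornerN. Qed.

Lemma subst_inv_is_monoid_morphism : monoid_morphism subst_inv.
Proof. by split=> [|p q]; rewrite !subst_invE ?rmorph1 ?hornerC // rmorphM hornerM. Qed.

HB.instance Definition _ :=
  GRing.isZmodMorphism.Build {poly int} F subst_inv subst_inv_is_zmod_morphism.
HB.instance Definition _ :=
  GRing.isMonoidMorphism.Build {poly int} F subst_inv subst_inv_is_monoid_morphism.

Lemma subst_invX : subst_inv 'X = tt^-1.
Proof. by rewrite subst_invE map_polyX hornerX. Qed.

Lemma subst_invC c : subst_inv c%:P = c%:~R.
Proof. by rewrite subst_invE map_polyC hornerC. Qed.

Lemma subst_inv_mul_ttX q :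
  subst_inv q * tt ^+ (size q).-1 = (\poly_(i < size q) q`_((size q).-1 - i))%:F.
Proof.
rewrite subst_invE horner_coef size_map_inj_poly ?rmorph0 //; last exact: intrF_inj.
rewrite mulr_suml poly_def rmorph_sum (reindex_inj rev_ord_inj) /=.
apply: eq_bigr => i _; rewrite coef_map -mul_polyC rmorphM rmorphXn /= -/tt tofrac_int.
rewrite subnS -subn1 subnAC subn1 exprVn -mulrA; congr (_ * _).
rewrite mulrC -expfB_cond; last by rewrite (negPf tt_neq0) leq_subr.
by rewrite subKn // -ltnS (ltn_predK (ltn_ord i)).
Qed.

Lemma subst_inv_eq0 q : (subst_inv q == 0) = (q == 0).
Proof.
apply/eqP/eqP => [sq0|->]; last exact: rmorph0.
apply/eqP; apply: contraT => q_neq0.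
have /esym/eqP := subst_inv_mul_ttX q; rewrite sq0 mul0r tofrac_eq0 => /eqP rev0.
have := congr1 (fun p : {poly int} => p`_0) rev0.
rewrite coef_poly size_poly_gt0 q_neq0 subn0 coef0 => /eqP.
by rewrite -/(lead_coef q) lead_coef_eq0 (negPf q_neq0).
Qed.

Lemma bar_frac (p q : {poly int}) : q != 0 ->
  bar (p%:F / q%:F) = subst_inv p / subst_inv q.
Proof.
move=> q_neq0; rewrite /bar; set x := p%:F / q%:F.
have d_neq0 : \d_(repr x) != 0 := denom_ratioP _.
have cross : p * \d_(repr x) = \n_(repr x) * q.
  have /eqP := frac_numden x; rewrite eqr_div ?tofrac_eq0 //.
  by rewrite -!rmorphM tofrac_eq => /eqP.
apply/eqP; rewrite eqr_div ?subst_inv_eq0 // -!rmorphM.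
by rewrite cross.
Qed.

Lemma bar_tofrac p : bar p%:F = subst_inv p.
Proof. by have := bar_frac p (oner_neq0 _); rewrite !rmorph1 !divr1. Qed.

Lemma bar_is_zmod_morphism : zmod_morphism bar.
Proof.
move=> x y; rewrite [x]frac_numden [y]frac_numden.
set a := \n_ _; set b := \d_ _; set c := \n_ _; set d := \d_ _.
have b_neq0 : b != 0 := denom_ratioP _; have d_neq0 : d != 0 := denom_ratioP _.
have -> : a%:F / b%:F - c%:F / d%:F = (a * d - c * b)%:F / (b * d)%:F.
  by rewrite -[in LHS]mulNr addf_div ?tofrac_eq0 // rmorphB !rmorphM mulNr.
rewrite !bar_frac ?mulf_neq0 // rmorphB !rmorphM /=.
by rewrite -[in RHS]mulNr addf_div ?subst_inv_eq0 // mulNr.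
Qed.

Lemma bar_is_monoid_morphism : monoid_morphism bar.
Proof.
split=> [|x y]; first by have := bar_tofrac 1; rewrite !rmorph1.
rewrite [x]frac_numden [y]frac_numden.
set a := \n_ _; set b := \d_ _; set c := \n_ _; set d := \d_ _.
have b_neq0 : b != 0 := denom_ratioP _; have d_neq0 : d != 0 := denom_ratioP _.
rewrite mulf_div -!rmorphM !bar_frac ?mulf_neq0 // !rmorphM /=.
by rewrite mulf_div.
Qed.

HB.instance Definition _ := GRing.isZmodMorphism.Build F F bar bar_is_zmod_morphism.
HB.instance Definition _ := GRing.isMonoidMorphism.Build F F bar bar_is_monoid_morphism.

Lemma bar_tt : bar tt = tt^-1.
Proof. by rewrite bar_tofrac subst_invX. Qed.

Lemma bar_subst_inv p : bar (subst_inv p) = p%:F.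
Proof.
elim/poly_ind: p => [|p c IH]; first by rewrite !rmorph0.
rewrite !rmorphD !rmorphM /= subst_invX subst_invC IH fmorphV /= bar_tt invrK.
by rewrite rmorph_int tofrac_int.
Qed.

Lemma barK : involutive bar.
Proof.
move=> x; rewrite [in RHS](frac_numden x) {1}(frac_numden x).
by rewrite bar_frac ?denom_ratioP // rmorphM fmorphV /= !bar_subst_inv.
Qed.

Lemma bar_ntz (k : int) : bar ((- tt) ^ k) = ((- tt) ^ k)^-1.
Proof. by rewrite fmorphXz rmorphN /= bar_tt -invrN exprz_inv invr_expz. Qed.

(** * Laurent polynomials and congruence modulo 1 + t *)

Lemma laurent_tofrac p : laurent p%:F.
Proof. by exists 0%N, p; rewrite expr0 divr1. Qed.

Lemma laurent1 : laurent 1.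
Proof. by rewrite -tofrac1; apply: laurent_tofrac. Qed.

Lemma laurent_int (c : int) : laurent c%:~R.
Proof. by rewrite -tofrac_int; apply: laurent_tofrac. Qed.

Lemma laurent_tt : laurent tt.
Proof. exact: laurent_tofrac. Qed.

Lemma laurent_ttV : laurent tt^-1.
Proof. by exists 1%N, 1; rewrite tofrac1 expr1 div1r. Qed.

Lemma laurentD x y : laurent x -> laurent y -> laurent (x + y).
Proof.
move=> [n [p ->]] [m [q ->]]; exists (n + m)%N, (p * 'X^m + q * 'X^n).
by rewrite rmorphD !rmorphM !rmorphXn exprD addf_div ?expf_neq0 ?tt_neq0.
Qed.

Lemma laurentN x : laurent x -> laurent (- x).
Proof. by move=> [n [p ->]]; exists n, (- p); rewrite rmorphN mulNr. Qed.

Lemma laurentB x y : laurent x -> laurent y -> laurent (x - y).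
Proof. by move=> lx ly; apply/laurentD/laurentN. Qed.

Lemma laurentM x y : laurent x -> laurent y -> laurent (x * y).
Proof.
move=> [n [p ->]] [m [q ->]]; exists (n + m)%N, (p * q).
by rewrite rmorphM exprD mulf_div.
Qed.

Lemma laurentX x n : laurent x -> laurent (x ^+ n).
Proof.
move=> lx; elim: n => [|n IH]; first by rewrite expr0; apply: laurent1.
by rewrite exprS; apply: laurentM.
Qed.

Lemma laurent_ttXV n : laurent (tt ^+ n)^-1.
Proof. by rewrite -exprVn; apply/laurentX/laurent_ttV. Qed.

Lemma laurent_ntz (k : int) : laurent ((- tt) ^ k).
Proof.
case: k => n; rewrite ?NegzE -?invr_expz -exprnP -?exprVn ?invrN.
all: apply/laurentX/laurentN; first [exact: laurent_tt | exact: laurent_ttV].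
Qed.

Lemma laurent_subst_inv p : laurent (subst_inv p).
Proof.
elim/poly_ind: p => [|p c IH]; first by rewrite rmorph0 -tofrac0; apply: laurent_tofrac.
rewrite rmorphD rmorphM /= subst_invX subst_invC.
by apply: laurentD; [apply: laurentM IH laurent_ttV | apply: laurent_int].
Qed.

Lemma laurent_bar x : laurent x -> laurent (bar x).
Proof.
move=> [n [p ->]]; rewrite rmorphM fmorphV rmorphXn /= bar_tofrac bar_tt exprVn invrK.
exact/laurentM/laurentX/laurent_tt/laurent_subst_inv.
Qed.

Lemma laurent_det n (A : 'M[F]_n) : (forall i j, laurent (A i j)) -> laurent (\det A).
Proof.
move=> lA; apply: big_ind => [|x y|s _]; first by rewrite -tofrac0; apply: laurent_tofrac.
  exact: laurentD.
apply/laurentM; first exact/laurentX/laurentN/laurent1.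
by apply: big_ind => [|x y|i _]; [apply: laurent1 | apply: laurentM | apply: lA].
Qed.

Lemma inGL_laurent_unit_det n (A : 'M[F]_n) :
  (forall i j, laurent (A i j)) -> \det A != 0 -> laurent (\det A)^-1 -> inGL A.
Proof.
move=> lA det_neq0 l_detV; split=> //; exists ((\det A)^-1 *: \adj A); split.
  move=> i j; rewrite !mxE; apply/laurentM/laurentM => //.
    exact/laurentX/laurentN/laurent1.
  by apply: laurent_det => k l; rewrite !mxE.
rewrite -scalemxAr mul_mx_adj -scalemxAl mul_adj_mx.
by rewrite scale_scalar_mx mulVf.
Qed.

Ltac laurent_closure :=
  repeat first [ assumption | apply: laurent1 | apply: laurent_tt | apply: laurent_ttV
               | apply: laurent_ttXV | apply: laurentB | apply: laurentD
               | apply: laurentN | apply: laurentX | apply: laurentM ].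

Definition congr1t (x y : F) : Prop := laurent ((x - y) / (1 + tt)).

Lemma congr1t_refl x : congr1t x x.
Proof. by rewrite /congr1t subrr mul0r -tofrac0; apply: laurent_tofrac. Qed.

Lemma congr1t_sym x y : congr1t x y -> congr1t y x.
Proof. by move=> lxy; rewrite /congr1t -opprB mulNr; apply: laurentN. Qed.

Lemma congr1tD x1 y1 x2 y2 :
  congr1t x1 y1 -> congr1t x2 y2 -> congr1t (x1 + x2) (y1 + y2).
Proof.
rewrite /congr1t => l1 l2.
have -> : (x1 + x2 - (y1 + y2)) / (1 + tt) = (x1 - y1) / (1 + tt) + (x2 - y2) / (1 + tt).
  by ring.
exact: laurentD.
Qed.

Lemma congr1tM x1 y1 x2 y2 : laurent x1 -> laurent y2 ->
  congr1t x1 y1 -> congr1t x2 y2 -> congr1t (x1 * x2) (y1 * y2).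
Proof.
rewrite /congr1t => lx1 ly2 l1 l2.
have -> : (x1 * x2 - y1 * y2) / (1 + tt) =
          x1 * ((x2 - y2) / (1 + tt)) + y2 * ((x1 - y1) / (1 + tt)).
  by ring.
by laurent_closure.
Qed.

Lemma congr1tX x y n : laurent x -> laurent y -> congr1t x y -> congr1t (x ^+ n) (y ^+ n).
Proof.
move=> lx ly cxy; elim: n => [|n IH]; first exact: congr1t_refl.
by rewrite !exprS; apply: congr1tM => //; apply: laurentX.
Qed.

Lemma congr1t_trans x y z : congr1t x y -> congr1t y z -> congr1t x z.
Proof.
rewrite /congr1t => lxy lyz.
have -> : (x - z) / (1 + tt) = (x - y) / (1 + tt) + (y - z) / (1 + tt) by ring.
exact: laurentD.
Qed.

Lemma congr1tN x y : congr1t x y -> congr1t (- x) (- y).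
Proof. by rewrite /congr1t -opprD mulNr; apply: laurentN. Qed.

Lemma congr1t_ttV : congr1t tt tt^-1.
Proof.
by rewrite /congr1t (sub_inv_div1t tt_neq0 tt1_neq0); laurent_closure.
Qed.

Lemma congr1t_ntt : congr1t (- tt) 1.
Proof.
by rewrite /congr1t -opprD addrC mulNr (divff tt1_neq0); laurent_closure.
Qed.

Lemma congr1t_ntz (k : int) : congr1t ((- tt) ^ k) 1.
Proof.
have congr1t_nttV : congr1t (- tt)^-1 1.
  by rewrite invrN; apply/congr1t_trans/congr1t_ntt/congr1tN/congr1t_sym/congr1t_ttV.
case: k => n; rewrite ?NegzE -?invr_expz -exprnP -?exprVn.
  by rewrite -(expr1n _ n); apply: congr1tX congr1t_ntt; laurent_closure.
by rewrite -(expr1n _ n.+1); apply: congr1tX congr1t_nttV; rewrite ?invrN; laurent_closure.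
Qed.

Lemma congr1t_poly p : congr1t p%:F (subst_inv p).
Proof.
elim/poly_ind: p => [|p c IH]; first by rewrite !rmorph0; apply: congr1t_refl.
rewrite !rmorphD !rmorphM /= subst_invX subst_invC tofrac_int.
apply/congr1tD/congr1t_refl/congr1tM/congr1t_ttV => //.
  exact: laurent_tofrac.
exact: laurent_ttV.
Qed.

Lemma congr1t_bar x : laurent x -> congr1t x (bar x).
Proof.
move=> [n [p ->]]; rewrite rmorphM fmorphV rmorphXn /= bar_tofrac bar_tt -!exprVn invrK.
apply: congr1tM; [exact: laurent_tofrac | exact/laurentX/laurent_tt | exact: congr1t_poly |].
by apply/congr1tX/congr1t_sym/congr1t_ttV; laurent_closure.
Qed.

(** * Evaluation at a primitive cube root of unity *)

Section LaurentEval.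
Variable z : algC.
Hypothesis z_neq0 : z != 0.

(* [laurent_eval] with [intr] in place of an eta-expanded lambda, so that the
   ring-morphism lemmas about [map_poly] apply. *)
Lemma laurent_evalE x w : laurent_eval z x w <->
  exists n p, x = p%:F / tt ^+ n /\ (map_poly intr p).[z] / z ^+ n = w.
Proof. by []. Qed.

Lemma laurent_eval_tofrac p : laurent_eval z p%:F (map_poly intr p).[z].
Proof. by exists 0%N, p; rewrite !expr0 !divr1. Qed.

Lemma laurent_eval_exists x : laurent x -> exists w, laurent_eval z x w.
Proof. by move=> [n [p ->]]; exists ((map_poly intr p).[z] / z ^+ n), n, p. Qed.

Lemma laurent_eval_unique x w1 w2 :
  laurent_eval z x w1 -> laurent_eval z x w2 -> w1 = w2.
Proof.
move=> /laurent_evalE [n [p [-> <-]]] /laurent_evalE [m [q [/eqP + <-]]].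
rewrite eqr_div ?expf_neq0 ?tt_neq0 // -!rmorphXn -!rmorphM tofrac_eq => /eqP pq.
apply/eqP; rewrite eqr_div ?expf_neq0 //.
have := congr1 (fun r => (map_poly intr r).[z]) pq.
by rewrite /= !rmorphM !hornerM !rmorphXn /= !map_polyX !hornerXn => ->.
Qed.

Lemma laurent_evalD x y v w :
  laurent_eval z x v -> laurent_eval z y w -> laurent_eval z (x + y) (v + w).
Proof.
move=> /laurent_evalE [n [p [-> <-]]] /laurent_evalE [m [q [-> <-]]].
apply/laurent_evalE; exists (n + m)%N, (p * 'X^m + q * 'X^n).
rewrite rmorphD !rmorphM !rmorphXn exprD addf_div ?expf_neq0 ?tt_neq0 //; split=> //.
rewrite rmorphD !rmorphM !rmorphXn /= map_polyX hornerD !hornerM !hornerXn.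
by rewrite exprD addf_div ?expf_neq0.
Qed.

Lemma laurent_evalM x y v w :
  laurent_eval z x v -> laurent_eval z y w -> laurent_eval z (x * y) (v * w).
Proof.
move=> /laurent_evalE [n [p [-> <-]]] /laurent_evalE [m [q [-> <-]]].
apply/laurent_evalE; exists (n + m)%N, (p * q).
split; first by rewrite rmorphM exprD mulf_div.
by rewrite rmorphM hornerM exprD mulf_div.
Qed.

End LaurentEval.

Definition Phi3 : {poly int} := 'X^2 + 'X + 1.

Lemma Phi3_tofrac : Phi3%:F = 1 + tt + tt ^+ 2.
Proof. by rewrite !rmorphD rmorphXn rmorph1 /= -/tt; ring. Qed.

Lemma size_Phi3 : size Phi3 = 3%N.
Proof. by rewrite !size_polyDl ?size_polyXn ?size_polyX ?size_poly1. Qed.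

Lemma monic_Phi3 : Phi3 \is monic.
Proof.
rewrite monicE lead_coefDl ?size_poly1 ?size_polyDl ?size_polyXn ?size_polyX //.
by rewrite lead_coefDl ?lead_coefXn // size_polyX size_polyXn.
Qed.

Lemma Phi_tt_neq0 : 1 + tt + tt ^+ 2 != 0.
Proof. by rewrite -Phi3_tofrac tofrac_eq0 monic_neq0 ?monic_Phi3. Qed.

Section CubeRoot.
Variable zeta : algC.
Hypothesis zetaE : zeta ^+ 2 + zeta + 1 = 0.

Lemma cube_root_neq0 : zeta != 0.
Proof. by apply: contra_eq_neq zetaE => ->; rewrite expr0n /= !add0r oner_neq0. Qed.

Lemma Phi3_cube_root : (map_poly intr Phi3).[zeta] = 0.
Proof. by rewrite !rmorphD rmorph1 /= map_polyXn map_polyX !hornerE. Qed.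

(* Multiplying by the conjugate [r0 + r1 zeta^2] gives the norm form
   [r0^2 - r0 r1 + r1^2], which vanishes only at [0]. *)
Lemma int_span_cube_root_eq0 (r0 r1 : int) :
  r0%:~R + r1%:~R * zeta = 0 -> r0 = 0 /\ r1 = 0.
Proof.
move=> r_eq0.
have : ((r0 ^+ 2 - r0 * r1 + r1 ^+ 2)%:~R : algC) =
       (r0%:~R + r1%:~R * zeta) * (r0%:~R + r1%:~R * zeta ^+ 2)
       - (r0%:~R * r1%:~R + r1%:~R ^+ 2 * (zeta - 1)) * (zeta ^+ 2 + zeta + 1).
  by ring.
rewrite r_eq0 zetaE mul0r mulr0 subr0 => /eqP; rewrite intr_eq0 => /eqP norm0.
by split; nia.
Qed.

Lemma Phi3_dvd_root q : (map_poly intr q).[zeta] = 0 -> exists d, q = d * Phi3.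
Proof.
move=> q_root; have q_div := Pdiv.RingMonic.rdivp_eq monic_Phi3 q.
set d := Pdiv.Ring.rdivp q Phi3 in q_div; set r := Pdiv.Ring.rmodp q Phi3 in q_div.
exists d; suff r0 : r = 0 by rewrite {1}q_div r0 addr0.
have size_r : (size r <= 2)%N.
  by have := Pdiv.Ring.ltn_rmodpN0 q (monic_neq0 monic_Phi3); rewrite size_Phi3.
have r_root : (map_poly intr r).[zeta] = 0.
  move: q_root; rewrite {1}q_div rmorphD rmorphM /= hornerD hornerM Phi3_cube_root.
  by rewrite mulr0 add0r.
move: r_root; rewrite (@horner_coef_wide _ 2); last first.
  by rewrite size_map_inj_poly ?rmorph0 //; apply: intr_inj.
rewrite !big_ord_recr big_ord0 /= add0r !coef_map /= expr0 mulr1 expr1.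
move=> /int_span_cube_root_eq0 [r0 r1]; apply/polyP => i; rewrite coef0.
by case: i => [|[|i]] //; rewrite nth_default // (leq_trans size_r).
Qed.

Lemma laurent_eval_phi_g1 (a g : F) :
  laurent a -> laurent g -> g = phi_g1 tt a -> laurent_eval zeta g 1.
Proof.
move=> la lg g_def; have zeta_neq0 := cube_root_neq0.
have [w ev_g] := laurent_eval_exists zeta lg; have [v ev_a] := laurent_eval_exists zeta la.
have g_eqn : g * ('X * (1 + 'X))%:F + 1%:F = a * Phi3%:F.
  rewrite rmorphM rmorphD !rmorph1 /= -/tt Phi3_tofrac g_def /phi_g1.
  by rewrite divfK ?subrK //; apply: mulf_neq0; [apply: tt_neq0 | apply: tt1_neq0].
(* Evaluate g_eqn at zeta, where Phi3 vanishes and zeta (1 + zeta) = -1. *)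
have ev_lhs := laurent_evalD zeta_neq0
  (laurent_evalM ev_g (laurent_eval_tofrac zeta ('X * (1 + 'X))))
  (laurent_eval_tofrac zeta 1).
have ev_rhs := laurent_evalM ev_a (laurent_eval_tofrac zeta Phi3).
rewrite g_eqn in ev_lhs; have := laurent_eval_unique zeta_neq0 ev_lhs ev_rhs.
rewrite Phi3_cube_root mulr0 rmorphM rmorphD !rmorph1 /= map_polyX !hornerE => w_eqn.
suff <- : w = 1 by [].
have : w - 1 = w * (zeta ^+ 2 + zeta + 1) - (w * zeta * (1 + zeta) + 1) by ring.
by rewrite zetaE w_eqn mulr0 subr0 => /eqP; rewrite subr_eq0 => /eqP.
Qed.

Lemma laurent_div_Phi_of_eval g :
  laurent_eval zeta g 1 -> laurent ((g - 1) / (1 + tt + tt ^+ 2)).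
Proof.
move=> /laurent_evalE [n [p [-> p_zeta]]].
have ttn_neq0 : tt ^+ n != 0 by rewrite expf_neq0 ?tt_neq0.
have p_root : (map_poly intr p).[zeta] = zeta ^+ n.
  by rewrite -[LHS](divfK (expf_neq0 n cube_root_neq0)) p_zeta mul1r.
have [|d pd] := @Phi3_dvd_root (p - 'X^n).
  by rewrite rmorphB rmorphXn /= map_polyX hornerD hornerN hornerXn p_root subrr.
have pdF : p%:F - tt ^+ n = d%:F * (1 + tt + tt ^+ 2).
  by rewrite -Phi3_tofrac -rmorphM -pd rmorphB rmorphXn.
rewrite -{1}(divff ttn_neq0) -mulrBl pdF.
by rewrite mulrAC mulfK ?Phi_tt_neq0 //; exists n, d.
Qed.

End CubeRoot.

Lemma phi_burau_lift a b c d : phi (burau_lift tt a b c d) = mx2 a b c d.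
Proof.
have t0 := tt_neq0; have t10 := tt1_neq0; have P0 := Phi_tt_neq0.
have e11 := phi_g1_lift11 t0 t10 P0 a; have e12 := phi_g2_lift12 t0 t10 P0 a b.
have e21 := phi_g1_lift21 t0 t10 P0 a c; have e22 := phi_g2_lift22 t0 t10 P0 a b c d.
rewrite /phi_g1 /phi_g2 in e11 e12 e21 e22.
apply/matrixP => i j; rewrite !mxE /gkl /fkl /=.
by case: i => [[|[|?]] ?] //=; case: j => [[|[|?]] ?] //=;
  rewrite !mxE /= ?e11 ?e12 ?e21 ?e22.
Qed.

Lemma laurent_unitary_lift (k : int) h b : laurent h -> laurent b ->
  forall i j, laurent (unitary_lift tt ((- tt) ^ k) (1 + (1 + tt + tt ^+ 2) * h) b
                                    (bar (1 + (1 + tt + tt ^+ 2) * h)) (bar b) i j).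
Proof.
move=> lh lb; have t0 := tt_neq0; have t10 := tt1_neq0; have P0 := Phi_tt_neq0.
set u := (- tt) ^ k; set a := 1 + _ * h.
have lu : laurent u := laurent_ntz k.
have lhb := laurent_bar lh; have lbb := laurent_bar lb.
have l11 : laurent (lift11 tt a) by rewrite (lift11_Phi P0); laurent_closure.
have l12 : laurent (lift12 tt a b) by rewrite (lift12_Phi t10 P0); laurent_closure.
have l21 : laurent (lift21 tt a (- u * (1 + tt^-1 + tt) * bar b)).
  by rewrite (lift21_Phi t0 P0); laurent_closure.
have l22 : laurent (lift22 tt a b (- u * (1 + tt^-1 + tt) * bar b) (u * bar a)).
  have bar_a : bar a = 1 + (1 + tt^-1 + tt^-1 ^+ 2) * bar h.
    by rewrite !rmorphD !rmorphM !rmorphD rmorphXn !rmorph1 /= bar_tt.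
  have := congr1t_sym (congr1t_ntz k); have := congr1t_bar lb; have := congr1t_bar lh.
  rewrite /congr1t bar_a (lift22_Phi t0 t10 P0) => lhD lbD luD.
  by laurent_closure.
move=> i j; rewrite !mxE.
by case: i => [[|[|[|?]]] ?] //=; case: j => [[|[|[|?]]] ?] //=; laurent_closure.
Qed.

Lemma burau_unitary_lift (k : int) (g11 g12 : F) :
  laurent g12 -> laurent ((g11 - 1) / (1 + tt + tt ^+ 2)) ->
  g11 * bar g11 + (1 + tt^-1 + tt) * g12 * bar g12 = 1 ->
  burau (unitary_lift tt ((- tt) ^ k) g11 g12 (bar g11) (bar g12)).
Proof.
move=> l12 lh unimod; have t0 := tt_neq0; have t10 := tt1_neq0; have P0 := Phi_tt_neq0.
set u := (- tt) ^ k; set A := unitary_lift _ _ _ _ _ _.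
have u_neq0 : u != 0 := ntz_neq0 k.
have lA : forall i j, laurent (A i j).
  rewrite /A; have -> : g11 = 1 + (1 + tt + tt ^+ 2) * ((g11 - 1) / (1 + tt + tt ^+ 2)).
    by rewrite mulrC (divfK P0) addrC subrK.
  exact: laurent_unitary_lift.
have detA : \det A = u.
  by rewrite (det_burau_lift t0 t10 P0) -[in RHS](mulr1 u) -[in RHS]unimod; ring.
split; [|split; [|split]].
- apply: inGL_laurent_unit_det lA _ _; rewrite detA ?invr_expz.
    exact: u_neq0.
  exact: laurent_ntz.
- exact: (powers_mul_burau_lift t0).
- exact: (burau_lift_mul_ones t0).
have := unitary_lift_form t0 u_neq0 t10 P0 unimod.
rewrite /barmx /A map_unitary_lift /= bar_tt bar_ntz !barK.
by rewrite /burau_form => ->.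
Qed.

Lemma det_Mform g11 g12 (k : int) : \det (Mform g11 g12 k) =
  (- tt) ^ k * (g11 * bar g11 + (1 + tt^-1 + tt) * g12 * bar g12).
Proof.
rewrite (expand_det_row _ ord0) !big_ord_recr big_ord0 /= /cofactor !det_mx11 !mxE /=.
ring.
Qed.

Theorem lemma3p11 (g11 g12 : F) (k : int) (zeta : algC) :
  laurent g11 -> laurent g12 ->
  inGL (Mform g11 g12 k) ->
  \det (Mform g11 g12 k) = (- tt) ^ k ->
  zeta ^+ 2 + zeta + 1 = 0 ->
  (in_phiB (Mform g11 g12 k) <-> laurent_eval zeta g11 1).
Proof.
move=> l11 l12 _ det_M zetaE.
have unimod : g11 * bar g11 + (1 + tt^-1 + tt) * g12 * bar g12 = 1.
  by apply: (mulfI (ntz_neq0 k)); rewrite -det_Mform det_M mulr1.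
split=> [[A [[[lA _] _] phiA]] | /(laurent_div_Phi_of_eval zetaE) lh].
  apply: (laurent_eval_phi_g1 zetaE (lA i0 i0) l11).
  have := congr1 (fun M : 'M[F]_2 => M ord0 ord0) phiA.
  by rewrite !mxE /gkl /fkl /phi_g1 /= => <-.
exists (unitary_lift tt ((- tt) ^ k) g11 g12 (bar g11) (bar g12)).
by split; [exact: burau_unitary_lift | exact: phi_burau_lift].
Qed.
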